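(* Let $\mathcal M$ be a compact smooth geodesically convex manifold of intrinsic dimension $d$ with a probability measure $\mu$, let $X_1,\dots,X_\ell$ be i.i.d. from $\mu$ and let $\mathbf x\in\mathcal M$. Assume $\mu(B_{\mathbf x}(r))\ge Qr^d$ for all $r\le R$, where $Q,R>0$. Let $X_{\mathcal M}^{(\ell)}(\mathbf x)$ be a point among $X_1,\dots,X_\ell$ minimizing $d_{\mathcal M}(\mathbf x,\cdot)$. Then for every $\lambda>0$, $$\int_0^{\lambda^2R^2}\Pr\Big[d_{\mathcal M}\big(\mathbf x,X_{\mathcal M}^{(\ell)}(\mathbf x)\big)>\frac{\sqrt r}{\lambda}\Big]\,dr\le\frac{2\lambda^2\,\ell^{-2/d}}{(1-e^{-Q})^2}.$$
   Context: $d_{\mathcal M}$ is the geodesic distance on $\mathcal M$ and $B_{\mathbf x}(r)=\{\mathbf x'\in\mathcal M:d_{\mathcal M}(\mathbf x,\mathbf x')<r\}$. *)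

From HB Require Import structures.
From mathcomp Require Import all_boot all_order all_algebra.
From mathcomp Require Import all_classical all_reals all_analysis.
Set Implicit Arguments. Unset Strict Implicit. Unset Printing Implicit Defensive.
Import Order.TTheory GRing.Theory Num.Theory.
Local Open Scope ring_scope.
Local Open Scope classical_set_scope.

Definition is_metric (R : realType) (M : Type) (dist : M -> M -> R) : Prop :=
  [/\ forall x y, 0 <= dist x y,
      forall x y, dist x y = 0 <-> x = y,
      forall x y, dist x y = dist y x &
      forall x y z, dist x z <= dist x y + dist y z].

Definition oball (R : realType) (M : Type) (dist : M -> M -> R) (x : M) (r : R)
  : set M := [set y | dist x y < r].

(* X_1, ..., X_l are i.i.d. with law mu: the joint law is the product mu^l,
   i.e. P (cap_i X_i^-1 A_i) = prod_i mu(A_i) for all measurable A_i. *)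
Definition iid_from (dO dM : measure_display) (R : realType)
  (Omega : measurableType dO) (M : measurableType dM)
  (P : probability Omega R) (mu : probability M R) (l : nat)
  (X : 'I_l -> Omega -> M) : Prop :=
  (forall i, measurable_fun setT (X i)) /\
  forall A : 'I_l -> set M, (forall i, measurable (A i)) ->
    P (\bigcap_(i in setT) (X i @^-1` A i)) = (\prod_(i < l) mu (A i))%E.

(* The nearest sample X^{(l)}_M(x) among X_1..X_l (l = n.+1 >= 1 samples):
   an index minimizing dist x (X_i omega). *)
Definition nearest (R : realType) (Omega M : Type) (dist : M -> M -> R)
  (n : nat) (X : 'I_n.+1 -> Omega -> M) (x : M) (w : Omega) : M :=
  X ([arg min_(i < ord0) dist x (X i w)])%O w.

From HB Require Import structures.
From mathcomp Require Import all_boot all_order all_algebra.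
From mathcomp Require Import all_classical all_reals all_analysis.
From mathcomp Require Import ring lra measurable_realfun.
Import Order.TTheory GRing.Theory Num.Theory.
Local Open Scope ring_scope.
Local Open Scope classical_set_scope.

(* The nearest of the l samples lies farther than s from x exactly when every
   sample misses the ball B_x(s), which by independence has probability
   (1 - mu B_x(s))^l <= exp (- l Q s^d) for s <= R.  Cut [0, lam^2 R^2] at
   a_m = lam^2 (m / l)^(2/d), the value of r at which l (sqrt r / lam)^d = m:
   on [a_m, a_(m+1)[ the integrand is at most exp(-Q)^m, and
   a_(m+1) - a_m <= lam^2 l^(-2/d) (2m + 1), so the integral is at most
   lam^2 l^(-2/d) sum_m (2m + 1) exp(-Q)^m <= 2 lam^2 l^(-2/d) / (1 - exp(-Q))^2. *)

Lemma sum_odd_mul_geometric_le (R : realFieldType) (q : R) (N : nat) :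
  0 <= q < 1 -> \sum_(m < N) (2 * m%:R + 1) * q ^+ m <= 2 / (1 - q) ^+ 2.
Proof.
move=> /andP[q_ge0 q_lt1].
have closed_form k : (1 - q) ^+ 2 * \sum_(m < k) (2 * m%:R + 1) * q ^+ m
    = 1 + q - q ^+ k * ((2 * k%:R + 1) - (2 * k%:R - 1) * q).
  elim: k => [|k IHk]; first by rewrite big_ord0; lra.
  rewrite big_ord_recr /= mulrDr IHk -addn1 natrD exprSr; ring.
have tail_ge0 : 0 <= q ^+ N * ((2 * N%:R + 1) - (2 * N%:R - 1) * q).
  by apply: mulr_ge0; [exact: exprn_ge0 | have : 0 <= N%:R :> R by []; nra].
rewrite ler_pdivlMr ?exprn_gt0 ?subr_gt0 // mulrC closed_form; lra.
Qed.

Lemma powR_le_exprn (R : realType) (k d : nat) (u t : R) :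
  (0 < k)%N -> (0 < d)%N -> 0 <= u -> 0 <= t ->
  u `^ (k%:R / d%:R) <= t ^+ k -> u <= t ^+ d.
Proof.
move=> k_gt0 d_gt0 u_ge0 t_ge0 le_k.
have [kR dR] : (k%:R : R) != 0 /\ (d%:R : R) != 0 by rewrite !pnatr_eq0 -!lt0n.
have inv_exps : k%:R / d%:R * (d%:R / k%:R) = 1 :> R.
  by field; rewrite kR dR.
rewrite -[leLHS](powRr1 u_ge0) -inv_exps powRrM.
have -> : t ^+ d = (t ^+ k) `^ (d%:R / k%:R).
  by rewrite -(powR_mulrn k t_ge0) -powRrM mulrCA divff // mulr1 powR_mulrn.
by apply: ge0_ler_powR; rewrite ?nnegrE ?powR_ge0 ?exprn_ge0 ?divr_ge0.
Qed.

Lemma powR_succ_sub_le (R : realType) (d m : nat) : (0 < d)%N ->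
  (m.+1%:R : R) `^ (2 / d%:R) - (m%:R : R) `^ (2 / d%:R) <= 2 * m%:R + 1.
Proof.
case: d => [//|[|d]] _.
  by rewrite divr1 !powR_mulrn // -natr1; nra.
set p : R := 2 / d.+2%:R.
have p_gt0 : 0 < p by rewrite divr_gt0.
have p_le1 : p <= 1 by rewrite ler_pdivrMr // mul1r (natrD _ 2 d) ler_wpDr.
case: m => [|m]; first by rewrite powR0 ?gt_eqF // powR1; lra.
have succ_le : (m.+2%:R : R) `^ p <= m.+2%:R by apply: ler1_powR; rewrite ?ler1n.
have ge1 : 1 <= (m.+1%:R : R) `^ p.
  by rewrite -[leLHS](powRr0 m.+1%:R); apply: ler_powR; rewrite ?ler1n // ltW.
have : (0 : R) <= m%:R by [].
rewrite -!natr1 in succ_le ge1 *; lra.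
Qed.

Definition scale_grid {R : realType} (lam L : R) (d m : nat) : R :=
  lam ^+ 2 * (m%:R / L) `^ (2 / d%:R).

Section scale_grid.
Context {R : realType} {lam L : R} {d : nat}.
Hypotheses (lam_gt0 : 0 < lam) (L_gt0 : 0 < L) (d_gt0 : (0 < d)%N).

Local Notation grid := (scale_grid lam L d).

Let exp_gt0 : 0 < 2 / d%:R :> R.
Proof. by rewrite divr_gt0 // ltr0n. Qed.

Lemma scale_grid0 : grid 0 = 0.
Proof. by rewrite /scale_grid mul0r powR0 ?gt_eqF // mulr0. Qed.

Lemma scale_grid_le_succ (m : nat) : grid m <= grid m.+1.
Proof.
rewrite /scale_grid ler_wpM2l ?sqr_ge0 //.
apply: ge0_ler_powR; rewrite ?nnegrE ?divr_ge0 ?(ltW L_gt0) ?(ltW exp_gt0) //.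
by rewrite ler_pM2r ?invr_gt0 // ler_nat.
Qed.

Lemma scale_grid_succ_sub_le (m : nat) :
  grid m.+1 - grid m <= lam ^+ 2 * L `^ (- (2 / d%:R)) * (2 * m%:R + 1).
Proof.
have split_L k : (k%:R / L) `^ (2 / d%:R) = k%:R `^ (2 / d%:R) * L `^ (- (2 / d%:R)).
  by rewrite powRM ?invr_ge0 ?(ltW L_gt0) // -(powR_inv1 (ltW L_gt0)) -powRrM mulN1r.
rewrite /scale_grid !split_L -mulrBr -mulrBl -mulrA ler_wpM2l ?sqr_ge0 //.
by rewrite mulrC ler_wpM2l ?powR_ge0 ?powR_succ_sub_le.
Qed.

Lemma exists_scale_grid_gt (b : R) : 0 <= b -> exists N : nat, b < grid N.
Proof.
move=> b_ge0; set y := (b / lam ^+ 2) `^ (d%:R / 2).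
have dR : (d%:R : R) != 0 by rewrite pnatr_eq0 -lt0n.
exists (Num.truncn (L * y)).+1.
rewrite /scale_grid -ltr_pdivrMl ?exprn_gt0 // mulrC.
have -> : b / lam ^+ 2 = y `^ (2 / d%:R).
  have inv_exps : d%:R / 2 * (2 / d%:R) = 1 :> R by field; rewrite dR.
  by rewrite -powRrM inv_exps powRr1 // divr_ge0 ?sqr_ge0.
apply: gt0_ltr_powR; rewrite ?nnegrE ?powR_ge0 ?divr_ge0 ?(ltW L_gt0) //.
by rewrite ltr_pdivlMr // mulrC truncnS_gt.
Qed.

Lemma scale_grid_le_sqrt (m : nat) (r : R) :
  grid m <= r -> m%:R <= L * (Num.sqrt r / lam) ^+ d.
Proof.
move=> grid_le; rewrite mulrC -ler_pdivrMr //.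
have r_ge0 : 0 <= r by apply: le_trans _ grid_le; rewrite mulr_ge0 ?sqr_ge0 ?powR_ge0.
apply: (@powR_le_exprn _ 2%N) => //.
- by rewrite divr_ge0 ?(ltW L_gt0).
- by rewrite divr_ge0 ?sqrtr_ge0 ?(ltW lam_gt0).
- by rewrite expr_div_n sqr_sqrtr // ler_pdivlMr ?exprn_gt0 // mulrC.
Qed.

Lemma sum_geometric_scale_grid_le (q : R) (N : nat) : 0 <= q < 1 ->
  \sum_(m < N) q ^+ m * (grid m.+1 - grid m)
    <= 2 * lam ^+ 2 * L `^ (- (2 / d%:R)) / (1 - q) ^+ 2.
Proof.
move=> /andP[q_ge0 q_lt1]; set c := lam ^+ 2 * L `^ (- (2 / d%:R)).
apply: (@le_trans _ _ (c * \sum_(m < N) (2 * m%:R + 1) * q ^+ m)).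
  rewrite mulr_sumr; apply: ler_sum => m _.
  by rewrite [leLHS]mulrC mulrA ler_wpM2r ?exprn_ge0 // scale_grid_succ_sub_le.
have -> : 2 * lam ^+ 2 * L `^ (- (2 / d%:R)) / (1 - q) ^+ 2 = c * (2 / (1 - q) ^+ 2).
  by rewrite /c; ring.
rewrite ler_wpM2l ?(mulr_ge0 (sqr_ge0 lam) (powR_ge0 _ _)) //.
by apply: sum_odd_mul_geometric_le; rewrite q_ge0.
Qed.

End scale_grid.

(* Unlike [ge0_le_integral], no measurability is required: the integrand of
   the theorem is not known to be measurable. *)
Lemma ge0_le_integral_nonmeasurable d (T : measurableType d) (R : realType)
  (mu : {measure set T -> \bar R}) (D : set T) (f g : T -> \bar R) :
  (forall t, D t -> (0 <= f t)%E) -> (forall t, D t -> (f t <= g t)%E) ->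
  (\int[mu]_(t in D) f t <= \int[mu]_(t in D) g t)%E.
Proof.
move=> f_ge0 fg.
have g_ge0 t : D t -> (0 <= g t)%E.
  by move=> Dt; exact: le_trans (f_ge0 t Dt) (fg t Dt).
rewrite !ge0_integralE //; apply: ereal_sup_le => _ [h /= hf <-].
exists h => //= t; apply: le_trans (hf t) _; rewrite /patch.
by case: ifP => // /set_mem Dt; exact: fg.
Qed.

Lemma exists_itv_index (R : realDomainType) (a : nat -> R) (N : nat) (r : R) :
  a 0 <= r < a N -> exists2 m, (m < N)%N & a m <= r < a m.+1.
Proof.
elim: N => [|N IHN] /andP[a0_le lt_aN].
  by move: (le_lt_trans a0_le lt_aN); rewrite ltxx.
have [lt_r|le_r] := ltP r (a N); last by exists N; rewrite ?le_r.
have /IHN[m lt_mN r_in] : a 0 <= r < a N by rewrite a0_le lt_r.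
by exists m => //; apply: ltnW.
Qed.

Lemma le_sum_indic_itv (R : realType) (a c : nat -> R) (y : \bar R)
    (N : nat) (r : R) :
  (forall m, 0 <= c m) ->
  (forall m, a m <= r < a m.+1 -> (y <= (c m)%:E)%E) ->
  a 0 <= r < a N ->
  (y <= \sum_(m < N) (c m * \1_[set` `[a m, a m.+1[%R] r)%:E)%E.
Proof.
move=> c_ge0 y_le /exists_itv_index[m lt_mN r_in].
apply: le_trans (y_le m r_in) _.
rewrite sumEFin lee_fin (bigD1 (Ordinal lt_mN)) //= indicE mem_set; last first.
  by rewrite /= in_itv.
rewrite mulr1 lerDl; apply: sumr_ge0 => i _.
by rewrite mulr_ge0 // indicE ler0n.
Qed.

Lemma integral_sum_indic_itv_le {R : realType} {D : set R} {a c : nat -> R}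
    {N : nat} :
  measurable D -> (forall m, 0 <= c m) -> (forall m, a m <= a m.+1) ->
  (\int[lebesgue_measure]_(r in D)
      \sum_(m < N) (c m * \1_[set` `[a m, a m.+1[%R] r)%:E
    <= (\sum_(m < N) c m * (a m.+1 - a m))%:E)%E.
Proof.
move=> mD c_ge0 a_nd.
have mI m : measurable [set` `[a m, a m.+1[%R] by exact: measurable_itv.
rewrite ge0_integral_sum //; last first.
- by move=> m r _; rewrite lee_fin mulr_ge0 // indicE ler0n.
- by move=> m; apply/measurable_EFinP; apply: measurable_funM.
rewrite -sumEFin; apply: lee_sum => m _.
have c_lt0F : (c m < 0)%R -> [set` `[a m, a m.+1[%R] = set0 by rewrite ltNge c_ge0.
have /= -> := @integralZl_indic _ _ _ lebesgue_measure _ mD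
  (fun=> [set` `[a m, a m.+1[%R]) (c m) c_lt0F (mI m).
rewrite integral_indic // EFinM lee_wpmul2l ?lee_fin //.
apply: le_trans (measureIl _ _ _) _ => //.
have := lebesgue_measure_itv `[a m, a m.+1[%R.
set V := (if _ then _ else _) => lebesgue_I.
have lebesgue_I_le : (lebesgue_measure [set` `[a m, a m.+1[%R] <= V)%E.
  by rewrite lebesgue_I.
apply: le_trans lebesgue_I_le _.
by rewrite /V /=; case: ifPn => _; rewrite ?lee_fin ?subr_ge0 -?EFinD.
Qed.

Lemma measurable_gt_of_measurable_lt d (T : measurableType d) (R : realType)
  (f : T -> R) (s : R) :
  (forall r, measurable [set t | f t < r]) -> measurable [set t | s < f t].
Proof.
move=> mlt.
have -> : [set t | s < f t] = ~` \bigcap_(k in setT) [set t | f t < s + k.+1%:R^-1].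
  apply/seteqP; split => t /=.
  - by case/ltr_add_invr => k sk /(_ k I) /(lt_trans sk); rewrite ltxx.
  - move=> nlt; rewrite ltNge; apply/negP => fs; apply: nlt => k _ /=.
    by apply: le_lt_trans fs _; rewrite ltrDl invr_gt0.
by apply: measurableC; apply: bigcapT_measurable.
Qed.

Section nearest_sample.
Context {R : realType} {Omega M : Type} {dist : M -> M -> R}.
Context {n : nat} {X : 'I_n.+1 -> Omega -> M} {x : M}.

Lemma nearest_far_bigcap (s : R) :
  [set w | s < dist x (nearest dist X x w)] =
  \bigcap_(i in setT) (X i @^-1` [set y | s < dist x y]).
Proof.
rewrite /nearest; apply/seteqP; split => w /=; case: arg_minP => // i _ i_min.
- by move=> s_lt j _; exact: lt_le_trans s_lt (i_min j isT).
- by move=> /(_ i I).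
Qed.

End nearest_sample.

Section nearest_sample_probability.
Context {R : realType} {dO dM : measure_display}.
Context {Omega : measurableType dO} {P : probability Omega R}.
Context {M : measurableType dM} {dist : M -> M -> R} {mu : probability M R}.
Context {n : nat} {X : 'I_n.+1 -> Omega -> M} {x : M}.
Hypothesis measurable_ball : forall r, measurable (oball dist x r).
Hypothesis iidX : iid_from P mu X.

Let measurable_far (s : R) : measurable [set y | s < dist x y].
Proof. exact: measurable_gt_of_measurable_lt. Qed.

Lemma measurable_nearest_far (s : R) :
  measurable [set w | s < dist x (nearest dist X x w)].
Proof.
rewrite nearest_far_bigcap; apply: fin_bigcap_measurable => [|i _].
  exact: finite_finset.
by rewrite -[X in measurable X]setTI; apply: iidX.1.
Qed.

Lemma prob_nearest_far_le (s : R) :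
  (P [set w | (s < dist x (nearest dist X x w))%R] <=
     ((1 - fine (mu (oball dist x s))) ^+ n.+1)%:E)%E.
Proof.
set B := oball dist x s; set F := [set y | (s < dist x y)%R].
have [mB mF] : measurable B /\ measurable F.
  by split; [exact: measurable_ball | exact: measurable_far].
have far_le : fine (mu F) <= 1 - fine (mu B).
  rewrite -lee_fin EFinB !fineK ?fin_num_measure //.
  rewrite -[X in (_ <= X)%E]probability_setC //.
  apply: le_measure; rewrite ?inE //; first exact: measurableC.
  by move=> y /= s_lt; rewrite /B /oball /= => /(lt_trans s_lt); rewrite ltxx.
rewrite nearest_far_bigcap (iidX.2 (fun=> F)) // -(fineK (fin_num_measure _ _ _)) //.
rewrite prodEFin lee_fin prodr_const card_ord lerXn2r ?nnegrE ?fine_ge0 //.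
exact: le_trans (fine_ge0 (measure_ge0 _ _)) far_le.
Qed.

Lemma prob_nearest_far_le_expR {d : nat} {Q s : R} :
  ((Q * s ^+ d)%:E <= mu (oball dist x s))%E ->
  (P [set w | (s < dist x (nearest dist X x w))%R] <=
     (expR (- (n.+1%:R * (Q * s ^+ d))))%:E)%E.
Proof.
move=> ball_ge; apply: le_trans (prob_nearest_far_le s) _; rewrite lee_fin.
move: ball_ge (probability_le1 mu (measurable_ball s)).
rewrite -[mu _]fineK ?fin_num_measure // !lee_fin => ball_ge ball_le1.
have exp_ge : 1 - Q * s ^+ d <= expR (- (Q * s ^+ d)).
  by have := expR_ge1Dx (- (Q * s ^+ d)); lra.
rewrite -mulrN expRM_natl; apply: (@le_trans _ _ ((1 - Q * s ^+ d) ^+ n.+1)).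
  by rewrite lerXn2r ?nnegrE; lra.
by rewrite lerXn2r ?nnegrE ?expR_ge0 //; lra.
Qed.

Lemma prob_nearest_far_le_geometric {d : nat} {Q Rr lam r : R} {m : nat} :
  (0 < d)%N -> 0 <= Q -> 0 <= Rr -> 0 < lam ->
  (forall s, 0 < s <= Rr -> ((Q * s ^+ d)%:E <= mu (oball dist x s))%E) ->
  scale_grid lam n.+1%:R d m <= r <= lam ^+ 2 * Rr ^+ 2 ->
  (P [set w | (Num.sqrt r / lam < dist x (nearest dist X x w))%R]
     <= (expR (- Q) ^+ m)%:E)%E.
Proof.
move=> d_gt0 Q_ge0 Rr_ge0 lam_gt0 growth /andP[grid_le r_le].
case: m grid_le => [|m] grid_le.
  by rewrite expr0 probability_le1 //; exact: measurable_nearest_far.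
have l_gt0 : (0 : R) < n.+1%:R by rewrite ltr0n.
have r_gt0 : 0 < r.
  by apply: lt_le_trans grid_le; rewrite /scale_grid mulr_gt0 ?exprn_gt0.
set s := Num.sqrt r / lam.
have s_in : 0 < s <= Rr.
  rewrite divr_gt0 ?sqrtr_gt0 //= ler_pdivrMr //.
  rewrite -(ger0_norm (mulr_ge0 Rr_ge0 (ltW lam_gt0))) -sqrtr_sqr ler_sqrt ?sqr_ge0 //.
  by rewrite exprMn mulrC.
apply: le_trans (prob_nearest_far_le_expR (growth s s_in)) _.
rewrite lee_fin -expRM_natl ler_expR mulrN lerN2.
have := scale_grid_le_sqrt lam_gt0 l_gt0 d_gt0 _ _ grid_le; rewrite -/s.
by move=> /(ler_wpM2l Q_ge0); rewrite mulrCA mulrC.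
Qed.

End nearest_sample_probability.

Theorem lemmaA1 (R : realType) (dO dM : measure_display)
  (Omega : measurableType dO) (P : probability Omega R)
  (M : measurableType dM) (dist : M -> M -> R) (mu : probability M R)
  (d n : nat) (X : 'I_n.+1 -> Omega -> M) (x : M) (Q Rr : R) :
  is_metric dist ->
  (forall y r, measurable (oball dist y r)) ->
  (0 < d)%N ->
  iid_from P mu X ->
  0 < Q -> 0 < Rr ->
  (forall r, 0 < r <= Rr -> ((Q * r ^+ d)%:E <= mu (oball dist x r))%E) ->
  forall lam : R, 0 < lam ->
  (\int[lebesgue_measure]_(r in `[0%R, (lam ^+ 2 * Rr ^+ 2)%R])
      P [set w | (Num.sqrt r / lam < dist x (nearest dist X x w))%R]
   <= (2 * lam ^+ 2 * (n.+1)%:R `^ (- (2 / d%:R))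
        / (1 - expR (- Q)) ^+ 2)%:E)%E.
Proof.
move=> _ measurable_ball d_gt0 iidX Q_gt0 Rr_gt0 growth lam lam_gt0.
have l_gt0 : (0 : R) < n.+1%:R by rewrite ltr0n.
set a := scale_grid lam n.+1%:R d.
have [N lt_aN] := exists_scale_grid_gt lam_gt0 l_gt0 d_gt0 _
  (mulr_ge0 (sqr_ge0 lam) (sqr_ge0 Rr)).
have q_in : 0 <= expR (- Q) < 1 by rewrite expR_ge0 expR_lt1 oppr_lt0.
apply: (@le_trans _ _ (\int[lebesgue_measure]_(r in `[0%R, (lam ^+ 2 * Rr ^+ 2)%R])
  \sum_(m < N) (expR (- Q) ^+ m * \1_[set` `[a m, a m.+1[%R] r)%:E))%E.
  apply: ge0_le_integral_nonmeasurable => [r _|r]; first exact: measure_ge0.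
  rewrite /= in_itv /= => /andP[r_ge0 r_le].
  apply: (@le_sum_indic_itv _ a (fun m => expR (- Q) ^+ m)) => [m|m /andP[a_le _]|].
  + by apply: exprn_ge0; case/andP: q_in.
  + apply: (prob_nearest_far_le_geometric (measurable_ball x) iidX d_gt0
      (ltW Q_gt0) (ltW Rr_gt0) lam_gt0 growth).
    by rewrite a_le r_le.
  + by rewrite /a scale_grid0 // r_ge0 (le_lt_trans r_le lt_aN).
apply: le_trans (integral_sum_indic_itv_le _ _ _) _.
- exact: measurable_itv.
- by move=> m; apply: exprn_ge0; case/andP: q_in.
- exact: scale_grid_le_succ.
by rewrite lee_fin sum_geometric_scale_grid_le.
Qed.
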